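(* On the open set $U=\{(\vec x,\vec p)\in\mathbb{R}^6:\vec x\wedge\vec p\neq0\}$ with bracket $\{x^a,p^b\}=\delta^{ab}$, consider the constraints $\phi_1=\vec x\cdot\vec p$ and $\phi_2=|\vec x|^2-|\vec p|^2$. They are second class, with $\{\phi_1,\phi_2\}=-2(|\vec x|^2+|\vec p|^2)$, and define the Dirac bracket $$\{F,G\}_D=\{F,G\}-\sum_{i,j}\{F,\phi_i\}(C^{-1})^{ij}\{\phi_j,G\},\qquad C_{ij}=\{\phi_i,\phi_j\}.$$ On the surface $\Sigma=\{\phi_1=\phi_2=0\}\cap U$ set $\mathcal N=|\vec J|$ with $\vec J=\vec x\wedge\vec p$, $\vec K=|\vec x|\,\vec x$, $\vec L=|\vec p|\,\vec p$. Then on $\Sigma$: $|\vec J|^2=|\vec K|^2=|\vec L|^2=\mathcal N^2$, $\vec J\cdot\vec K=\vec J\cdot\vec L=\vec K\cdot\vec L=0$, and the Dirac brackets are $$\{J_a,J_b\}_D=\epsilon_{abc}J_c,\quad \{J_a,K_b\}_D=\epsilon_{abc}K_c,\quad \{J_a,L_b\}_D=\epsilon_{abc}L_c,$$ $$\{K_a,K_b\}_D=-\epsilon_{abc}J_c,\quad \{L_a,L_b\}_D=-\epsilon_{abc}J_c,\quad \{K_a,L_b\}_D=\delta_{ab}\mathcal N,$$ $$\{\mathcal N,J_a\}_D=0,\quad \{\mathcal N,K_a\}_D=-L_a,\quad \{\mathcal N,L_a\}_D=K_a,$$ i.e. $(\mathcal N,\vec J,\vec K,\vec L)$ span an $\mathfrak{so}(3,2)$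 algebra.
   Context: $\epsilon_{abc}$ is the totally antisymmetric symbol with $\epsilon_{123}=1$; repeated indices are summed. Dirac brackets of functions are evaluated on the constraint surface $\Sigma$. *)

From Stdlib Require Import Reals Lra ClassicalEpsilon.
Open Scope R_scope.

Inductive idx := I1 | I2 | I3.

Definition idx_eq_dec (a b : idx) : {a = b} + {a <> b}.
Proof. decide equality. Defined.

Definition sum3 (f : idx -> R) : R := f I1 + f I2 + f I3.

Definition delta (a b : idx) : R := if idx_eq_dec a b then 1 else 0.

Definition eps (a b c : idx) : R :=
  match a, b, c with
  | I1, I2, I3 => 1 | I2, I3, I1 => 1 | I3, I1, I2 => 1
  | I1, I3, I2 => -1 | I3, I2, I1 => -1 | I2, I1, I3 => -1
  | _, _, _ => 0
  end.

Definition vec := idx -> R.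
Definition dot (u v : vec) : R := sum3 (fun a => u a * v a).
Definition vnorm (u : vec) : R := sqrt (dot u u).
Definition cross (u v : vec) : vec :=
  fun a => sum3 (fun b => sum3 (fun c => eps a b c * u b * v c)).

Definition PF := vec -> vec -> R.

Definition upd (v : vec) (a : idx) (t : R) : vec :=
  fun b => if idx_eq_dec b a then t else v b.

(* the derivative of f at t (the unique l with derivable_pt_lim f t l, when it exists) *)
Definition Dv (f : R -> R) (t : R) : R :=
  epsilon (inhabits 0) (fun l => derivable_pt_lim f t l).

Definition dx (a : idx) (F : PF) (x p : vec) : R := Dv (fun t => F (upd x a t) p) (x a).
Definition dp (a : idx) (F : PF) (x p : vec) : R := Dv (fun t => F x (upd p a t)) (p a).

Definition PB (F G : PF) : PF := fun x p =>
  sum3 (fun a => dx a F x p * dp a G x p - dp a F x p * dx a G x p).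

Definition phi1 : PF := fun x p => dot x p.
Definition phi2 : PF := fun x p => dot x x - dot p p.

Inductive ci := C1 | C2.
Definition phi (i : ci) : PF := match i with C1 => phi1 | C2 => phi2 end.
Definition sum2 (f : ci -> R) : R := f C1 + f C2.

Definition Cmat (x p : vec) (i j : ci) : R := PB (phi i) (phi j) x p.
Definition Cinv (x p : vec) (i j : ci) : R :=
  let c11 := Cmat x p C1 C1 in let c12 := Cmat x p C1 C2 in
  let c21 := Cmat x p C2 C1 in let c22 := Cmat x p C2 C2 in
  let det := c11 * c22 - c12 * c21 in
  match i, j with
  | C1, C1 => c22 / det | C1, C2 => - c12 / det
  | C2, C1 => - c21 / det | C2, C2 => c11 / det
  end.

Definition DB (F G : PF) : PF := fun x p =>
  PB F G x p - sum2 (fun i => sum2 (fun j =>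
     PB F (phi i) x p * Cinv x p i j * PB (phi j) G x p)).

Definition inU (x p : vec) : Prop := ~ (forall a, cross x p a = 0).
Definition inSigma (x p : vec) : Prop := phi1 x p = 0 /\ phi2 x p = 0 /\ inU x p.

Definition Jf (a : idx) : PF := fun x p => cross x p a.
Definition Kf (a : idx) : PF := fun x p => vnorm x * x a.
Definition Lf (a : idx) : PF := fun x p => vnorm p * p a.
Definition Nf : PF := fun x p => vnorm (cross x p).

(* The constraint matrix is antidiagonal, C12 = -C21 = -2(|x|^2 + |p|^2), so the Dirac
   bracket is {F,G} + ({F,phi1}{G,phi2} - {F,phi2}{G,phi1}) / (2(|x|^2 + |p|^2)).
   The flow of phi1 is the dilation (x, p) -> (e^t x, e^-t p) and that of phi2 a boost
   mixing x and p; both preserve x /\ p, so J and N commute with the constraints and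
   their Dirac brackets are Poisson brackets.  K and L are rescaled by phi1 and mixed
   into each other by phi2.  On Sigma, x.p = 0 and |x| = |p| = sqrt N, which turns every remaining
   bracket into an explicit identity in the coordinates. *)

From Pilot Require Import Defs.
From Stdlib Require Import Reals Lra ClassicalEpsilon.
From Coquelicot Require Import Coquelicot.
Open Scope R_scope.

Lemma Dv_of_is_derive f t l : is_derive f t l -> Dv f t = l.
Proof.
  intro Hf. apply is_derive_Reals in Hf.
  apply (uniqueness_limite f t); [| exact Hf].
  apply (epsilon_spec (inhabits 0) (fun l => derivable_pt_lim f t l)).
  now exists l.
Qed.

Ltac components :=
  unfold Jf, Kf, Lf, dot, cross, sum3 in *;
  cbn [upd eps delta idx_eq_dec idx_rec idx_rect sumbool_rec sumbool_rect] in *.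

Lemma dot_pos u : ~ (forall a, u a = 0) -> 0 < dot u u.
Proof.
  intro Hu. unfold dot, sum3.
  destruct (Rlt_dec 0 (u I1 * u I1 + u I2 * u I2 + u I3 * u I3)) as [H | H]; [exact H |].
  exfalso; apply Hu; intro a; destruct a; nra.
Qed.

Lemma vnorm_sq u : vnorm u ^ 2 = dot u u.
Proof.
  unfold vnorm. rewrite pow2_sqrt; [reflexivity |].
  unfold dot, sum3; nra.
Qed.

Lemma vnorm_neq0 u : 0 < dot u u -> vnorm u <> 0.
Proof. intro Hu. apply Rgt_not_eq, sqrt_lt_R0, Hu. Qed.

Lemma dot_scale_l c u v : dot (fun a => c * u a) v = c * dot u v.
Proof. unfold dot, sum3; ring. Qed.
Lemma dot_scale_r c u v : dot u (fun a => c * v a) = c * dot u v.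
Proof. unfold dot, sum3; ring. Qed.

Lemma dot_J_J x p : dot (fun a => Jf a x p) (fun a => Jf a x p) = Nf x p ^ 2.
Proof. symmetry; apply vnorm_sq. Qed.

Lemma dot_J_K x p : dot (fun a => Jf a x p) (fun a => Kf a x p) = 0.
Proof. components; ring. Qed.

Lemma dot_J_L x p : dot (fun a => Jf a x p) (fun a => Lf a x p) = 0.
Proof. components; ring. Qed.

Lemma dot_cross_cross u v : dot (cross u v) (cross u v) = dot u u * dot v v - dot u v ^ 2.
Proof. unfold dot, cross, sum3; simpl; ring. Qed.

Ltac partial_derivative :=
  intros; unfold dx, dp; apply Dv_of_is_derive; unfold phi1, phi2, Kf, Lf, Nf, vnorm in *; components; auto_derive;
  try solve [repeat split; auto; lra].

Lemma dx_phi1 a x p : dx a phi1 x p = p a.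
Proof. destruct a; partial_derivative; ring. Qed.
Lemma dp_phi1 a x p : dp a phi1 x p = x a.
Proof. destruct a; partial_derivative; ring. Qed.
Lemma dx_phi2 a x p : dx a phi2 x p = 2 * x a.
Proof. destruct a; partial_derivative; ring. Qed.
Lemma dp_phi2 a x p : dp a phi2 x p = - 2 * p a.
Proof. destruct a; partial_derivative; ring. Qed.

Lemma dx_J a d x p : dx d (Jf a) x p = sum3 (fun c => eps a d c * p c).
Proof. destruct a, d; partial_derivative; ring. Qed.
Lemma dp_J a d x p : dp d (Jf a) x p = sum3 (fun b => eps a b d * x b).
Proof. destruct a, d; partial_derivative; ring. Qed.

Lemma dx_K a d x p : 0 < dot x x ->
  dx d (Kf a) x p = x d * x a / vnorm x + vnorm x * delta a d.
Proof.
  intro Hx; pose proof (vnorm_neq0 x Hx) as Hn.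
  destruct a, d; partial_derivative; field; exact Hn.
Qed.
Lemma dp_K a d x p : dp d (Kf a) x p = 0.
Proof. destruct a, d; partial_derivative; ring. Qed.
Lemma dx_L a d x p : dx d (Lf a) x p = 0.
Proof. destruct a, d; partial_derivative; ring. Qed.
Lemma dp_L a d x p : 0 < dot p p ->
  dp d (Lf a) x p = p d * p a / vnorm p + vnorm p * delta a d.
Proof.
  intro Hp; pose proof (vnorm_neq0 p Hp) as Hn.
  destruct a, d; partial_derivative; field; exact Hn.
Qed.

Lemma dx_N d x p : 0 < dot (cross x p) (cross x p) ->
  dx d Nf x p = (dot p p * x d - dot x p * p d) / Nf x p.
Proof.
  intro HJ; pose proof (vnorm_neq0 _ HJ) as Hn.
  destruct d; partial_derivative; field; exact Hn.
Qed.
Lemma dp_N d x p : 0 < dot (cross x p) (cross x p) ->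
  dp d Nf x p = (dot x x * p d - dot x p * x d) / Nf x p.
Proof.
  intro HJ; pose proof (vnorm_neq0 _ HJ) as Hn.
  destruct d; partial_derivative; field; exact Hn.
Qed.

Ltac expand_bracket :=
  unfold PB, sum3;
  rewrite ?dx_phi1, ?dp_phi1, ?dx_phi2, ?dp_phi2, ?dx_J, ?dp_J, ?dp_K, ?dx_L,
    ?dx_K, ?dp_L, ?dx_N, ?dp_N by assumption.

Lemma PB_antisym F G x p : PB G F x p = - PB F G x p.
Proof. unfold PB, sum3; ring. Qed.

Lemma PB_diag F x p : PB F F x p = 0.
Proof. unfold PB, sum3; ring. Qed.

Lemma PB_phi1_phi2 x p : PB phi1 phi2 x p = -2 * (dot x x + dot p p).
Proof. expand_bracket; components; ring. Qed.

Lemma DB_expand F G x p : dot x x + dot p p <> 0 ->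
  DB F G x p = PB F G x p +
    (PB F phi1 x p * PB G phi2 x p - PB F phi2 x p * PB G phi1 x p)
    / (2 * (dot x x + dot p p)).
Proof.
  intro Hq. unfold DB, sum2, Defs.Cinv, Cmat; cbn [phi].
  rewrite !PB_diag, (PB_antisym phi1 phi2), (PB_antisym G phi1), (PB_antisym G phi2),
    PB_phi1_phi2.
  field; exact Hq.
Qed.

Lemma PB_J_phi1 a x p : PB (Jf a) phi1 x p = 0.
Proof. expand_bracket; destruct a; components; ring. Qed.
Lemma PB_J_phi2 a x p : PB (Jf a) phi2 x p = 0.
Proof. expand_bracket; destruct a; components; ring. Qed.

Lemma PB_K_phi1 a x p : 0 < dot x x -> PB (Kf a) phi1 x p = 2 * Kf a x p.
Proof.
  intro Hx. pose proof (vnorm_neq0 x Hx). expand_bracket.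
  transitivity ((dot x x / vnorm x + vnorm x) * x a); [destruct a; components; field; auto |].
  rewrite <- vnorm_sq. unfold Kf. field; auto.
Qed.
Lemma PB_K_phi2 a x p : 0 < dot x x ->
  PB (Kf a) phi2 x p = -2 * (dot x p / vnorm x * x a + vnorm x * p a).
Proof. intro Hx. pose proof (vnorm_neq0 x Hx). expand_bracket; destruct a; components; field; auto. Qed.

Lemma PB_L_phi1 a x p : 0 < dot p p -> PB (Lf a) phi1 x p = -2 * Lf a x p.
Proof.
  intro Hp. pose proof (vnorm_neq0 p Hp). expand_bracket.
  transitivity (- (dot p p / vnorm p + vnorm p) * p a); [destruct a; components; field; auto |].
  rewrite <- vnorm_sq. unfold Lf. field; auto.
Qed.
Lemma PB_L_phi2 a x p : 0 < dot p p ->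
  PB (Lf a) phi2 x p = -2 * (dot x p / vnorm p * p a + vnorm p * x a).
Proof. intro Hp. pose proof (vnorm_neq0 p Hp). expand_bracket; destruct a; components; field; auto. Qed.

Lemma PB_N_phi1 x p : 0 < dot (cross x p) (cross x p) -> PB Nf phi1 x p = 0.
Proof.
  intro HJ. assert (Nf x p <> 0) by now apply vnorm_neq0.
  expand_bracket; components; field; auto.
Qed.
Lemma PB_N_phi2 x p : 0 < dot (cross x p) (cross x p) -> PB Nf phi2 x p = 0.
Proof.
  intro HJ. assert (Nf x p <> 0) by now apply vnorm_neq0.
  expand_bracket; components; field; auto.
Qed.

Lemma PB_J_J a b x p : PB (Jf a) (Jf b) x p = sum3 (fun c => eps a b c * Jf c x p).
Proof. expand_bracket; destruct a, b; components; ring. Qed.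
Lemma PB_J_K a b x p : 0 < dot x x ->
  PB (Jf a) (Kf b) x p = sum3 (fun c => eps a b c * Kf c x p).
Proof.
  intro Hx. pose proof (vnorm_neq0 x Hx).
  expand_bracket; destruct a, b; components; field; auto.
Qed.
Lemma PB_J_L a b x p : 0 < dot p p ->
  PB (Jf a) (Lf b) x p = sum3 (fun c => eps a b c * Lf c x p).
Proof.
  intro Hp. pose proof (vnorm_neq0 p Hp).
  expand_bracket; destruct a, b; components; field; auto.
Qed.

Lemma PB_K_K a b x p : PB (Kf a) (Kf b) x p = 0.
Proof. expand_bracket; ring. Qed.
Lemma PB_L_L a b x p : PB (Lf a) (Lf b) x p = 0.
Proof. expand_bracket; ring. Qed.
Lemma PB_K_L a b x p : 0 < dot x x -> 0 < dot p p ->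
  PB (Kf a) (Lf b) x p =
    dot x p * x a * p b / (vnorm x * vnorm p) + vnorm p / vnorm x * x a * x b
    + vnorm x / vnorm p * p a * p b + vnorm x * vnorm p * delta a b.
Proof.
  intros Hx Hp. pose proof (vnorm_neq0 x Hx). pose proof (vnorm_neq0 p Hp).
  expand_bracket; destruct a, b; components; field; auto.
Qed.

Lemma PB_N_J a x p : 0 < dot (cross x p) (cross x p) -> PB Nf (Jf a) x p = 0.
Proof.
  intro HJ. assert (Nf x p <> 0) by now apply vnorm_neq0.
  expand_bracket; destruct a; components; field; auto.
Qed.
Lemma PB_N_K a x p : 0 < dot x x -> 0 < dot (cross x p) (cross x p) ->
  PB Nf (Kf a) x p = - vnorm x * (dot x x * p a - dot x p * x a) / Nf x p.
Proof.
  intros Hx HJ. pose proof (vnorm_neq0 x Hx). assert (Nf x p <> 0) by now apply vnorm_neq0.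
  expand_bracket; destruct a; components; field; auto.
Qed.
Lemma PB_N_L a x p : 0 < dot p p -> 0 < dot (cross x p) (cross x p) ->
  PB Nf (Lf a) x p = vnorm p * (dot p p * x a - dot x p * p a) / Nf x p.
Proof.
  intros Hp HJ. pose proof (vnorm_neq0 p Hp). assert (Nf x p <> 0) by now apply vnorm_neq0.
  expand_bracket; destruct a; components; field; auto.
Qed.

Section ConstraintSurface.

Variables x p : vec.
Hypothesis Hsig : inSigma x p.

Lemma Sigma_dot_xp : dot x p = 0.
Proof. apply Hsig. Qed.

Lemma Sigma_dot_pp : dot p p = dot x x.
Proof. destruct Hsig as [_ [H2 _]]. unfold phi2 in H2. lra. Qed.

Lemma Sigma_J_pos : 0 < dot (cross x p) (cross x p).
Proof. apply dot_pos, Hsig. Qed.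

Lemma Sigma_dot_JJ : dot (cross x p) (cross x p) = dot x x ^ 2.
Proof. rewrite dot_cross_cross, Sigma_dot_xp, Sigma_dot_pp; ring. Qed.

Lemma Sigma_x_pos : 0 < dot x x.
Proof.
  assert (Hge : 0 <= dot x x) by (unfold dot, sum3; nra).
  pose proof Sigma_J_pos as HJ. rewrite Sigma_dot_JJ in HJ.
  destruct Hge as [Hlt | Heq]; [exact Hlt |].
  rewrite <- Heq in HJ. lra.
Qed.

Lemma Sigma_p_pos : 0 < dot p p.
Proof. rewrite Sigma_dot_pp; apply Sigma_x_pos. Qed.

Lemma Sigma_vnorm_p : vnorm p = vnorm x.
Proof. unfold vnorm; now rewrite Sigma_dot_pp. Qed.

Lemma Sigma_N : Nf x p = dot x x.
Proof.
  unfold Nf, vnorm. rewrite Sigma_dot_JJ, <- Rsqr_pow2.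
  apply sqrt_Rsqr, Rlt_le, Sigma_x_pos.
Qed.

Lemma DB_Sigma F G : DB F G x p = PB F G x p +
  (PB F phi1 x p * PB G phi2 x p - PB F phi2 x p * PB G phi1 x p) / (4 * dot x x).
Proof.
  pose proof Sigma_x_pos. rewrite DB_expand by (rewrite Sigma_dot_pp; lra).
  rewrite Sigma_dot_pp. replace (2 * (dot x x + dot x x)) with (4 * dot x x) by ring.
  reflexivity.
Qed.

Lemma Sigma_K_phi2 a : PB (Kf a) phi2 x p = -2 * Lf a x p.
Proof.
  rewrite PB_K_phi2 by apply Sigma_x_pos.
  unfold Lf; rewrite Sigma_dot_xp, Sigma_vnorm_p. unfold Rdiv; ring.
Qed.

Lemma Sigma_L_phi2 a : PB (Lf a) phi2 x p = -2 * Kf a x p.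
Proof.
  rewrite PB_L_phi2 by apply Sigma_p_pos.
  unfold Kf; rewrite Sigma_dot_xp, Sigma_vnorm_p. unfold Rdiv; ring.
Qed.

Lemma Sigma_dot_KK : dot (fun a => Kf a x p) (fun a => Kf a x p) = Nf x p ^ 2.
Proof. unfold Kf. rewrite dot_scale_l, dot_scale_r, Sigma_N, <- vnorm_sq; ring. Qed.

Lemma Sigma_dot_LL : dot (fun a => Lf a x p) (fun a => Lf a x p) = Nf x p ^ 2.
Proof.
  unfold Lf. rewrite dot_scale_l, dot_scale_r, Sigma_N, <- Sigma_dot_pp, <- vnorm_sq; ring.
Qed.

Lemma Sigma_dot_KL : dot (fun a => Kf a x p) (fun a => Lf a x p) = 0.
Proof. unfold Kf, Lf. rewrite dot_scale_l, dot_scale_r, Sigma_dot_xp; ring. Qed.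

Ltac reduce_on_Sigma :=
  unfold Kf, Lf;
  rewrite ?Sigma_N, ?Sigma_dot_xp, ?Sigma_dot_pp, ?Sigma_vnorm_p, <- ?(vnorm_sq x).

Lemma DB_J_J a b : DB (Jf a) (Jf b) x p = sum3 (fun c => eps a b c * Jf c x p).
Proof. rewrite DB_Sigma, !PB_J_phi1, !PB_J_phi2, PB_J_J. unfold Rdiv; ring. Qed.

Lemma DB_J_K a b : DB (Jf a) (Kf b) x p = sum3 (fun c => eps a b c * Kf c x p).
Proof.
  rewrite DB_Sigma, PB_J_phi1, PB_J_phi2, PB_J_K by apply Sigma_x_pos.
  unfold Rdiv; ring.
Qed.

Lemma DB_J_L a b : DB (Jf a) (Lf b) x p = sum3 (fun c => eps a b c * Lf c x p).
Proof.
  rewrite DB_Sigma, PB_J_phi1, PB_J_phi2, PB_J_L by apply Sigma_p_pos.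
  unfold Rdiv; ring.
Qed.

Lemma DB_K_K a b : DB (Kf a) (Kf b) x p = - sum3 (fun c => eps a b c * Jf c x p).
Proof.
  pose proof (vnorm_neq0 x Sigma_x_pos).
  rewrite DB_Sigma, PB_K_K, !PB_K_phi1, !Sigma_K_phi2 by apply Sigma_x_pos.
  reduce_on_Sigma. destruct a, b; components; field; auto.
Qed.

Lemma DB_L_L a b : DB (Lf a) (Lf b) x p = - sum3 (fun c => eps a b c * Jf c x p).
Proof.
  pose proof (vnorm_neq0 x Sigma_x_pos).
  rewrite DB_Sigma, PB_L_L, !PB_L_phi1, !Sigma_L_phi2 by apply Sigma_p_pos.
  reduce_on_Sigma. destruct a, b; components; field; auto.
Qed.

Lemma DB_K_L a b : DB (Kf a) (Lf b) x p = delta a b * Nf x p.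
Proof.
  pose proof (vnorm_neq0 x Sigma_x_pos).
  rewrite DB_Sigma, PB_K_L, PB_K_phi1, PB_L_phi1, Sigma_K_phi2, Sigma_L_phi2
    by (apply Sigma_x_pos || apply Sigma_p_pos).
  reduce_on_Sigma. destruct a, b; components; field; auto.
Qed.

Lemma DB_N_J a : DB Nf (Jf a) x p = 0.
Proof.
  pose proof Sigma_J_pos.
  rewrite DB_Sigma, PB_N_phi1, PB_N_phi2, PB_N_J by assumption.
  unfold Rdiv; ring.
Qed.

Lemma DB_N_K a : DB Nf (Kf a) x p = - Lf a x p.
Proof.
  pose proof Sigma_J_pos. pose proof Sigma_x_pos. pose proof (vnorm_neq0 x Sigma_x_pos).
  rewrite DB_Sigma, PB_N_phi1, PB_N_phi2, PB_N_K by assumption.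
  reduce_on_Sigma. field; auto.
Qed.

Lemma DB_N_L a : DB Nf (Lf a) x p = Kf a x p.
Proof.
  pose proof Sigma_J_pos. pose proof Sigma_p_pos. pose proof (vnorm_neq0 x Sigma_x_pos).
  rewrite DB_Sigma, PB_N_phi1, PB_N_phi2, PB_N_L by assumption.
  reduce_on_Sigma. field; auto.
Qed.

End ConstraintSurface.

Theorem mainTheorem6 :
  (forall x p : vec, inU x p ->
     PB phi1 phi2 x p = -2 * (dot x x + dot p p)) /\
  (forall x p : vec, inSigma x p ->
     let J : vec := fun a => Jf a x p in
     let K : vec := fun a => Kf a x p in
     let L : vec := fun a => Lf a x p in
     let N := Nf x p in
     dot J J = N ^ 2 /\ dot K K = N ^ 2 /\ dot L L = N ^ 2 /\
     dot J K = 0 /\ dot J L = 0 /\ dot K L = 0 /\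
     (forall a b : idx,
        DB (Jf a) (Jf b) x p = sum3 (fun c => eps a b c * J c) /\
        DB (Jf a) (Kf b) x p = sum3 (fun c => eps a b c * K c) /\
        DB (Jf a) (Lf b) x p = sum3 (fun c => eps a b c * L c) /\
        DB (Kf a) (Kf b) x p = - sum3 (fun c => eps a b c * J c) /\
        DB (Lf a) (Lf b) x p = - sum3 (fun c => eps a b c * J c) /\
        DB (Kf a) (Lf b) x p = delta a b * N) /\
     (forall a : idx,
        DB Nf (Jf a) x p = 0 /\
        DB Nf (Kf a) x p = - L a /\
        DB Nf (Lf a) x p = K a)).
Proof.
  split; [intros x p _; apply PB_phi1_phi2 |].
  intros x p Hsig; cbv zeta.
  split; [apply dot_J_J |].
  split; [apply Sigma_dot_KK, Hsig |].
  split; [apply Sigma_dot_LL, Hsig |].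
  split; [apply dot_J_K |].
  split; [apply dot_J_L |].
  split; [apply Sigma_dot_KL, Hsig |].
  split.
  - intros a b.
    repeat split; [apply DB_J_J | apply DB_J_K | apply DB_J_L
                  | apply DB_K_K | apply DB_L_L | apply DB_K_L]; exact Hsig.
  - intro a.
    repeat split; [apply DB_N_J | apply DB_N_K | apply DB_N_L]; exact Hsig.
Qed.
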